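(* Let $\mathcal H,\mathcal K$ be Hilbert spaces, $A$ a densely defined linear operator in $\mathcal H$ and $B$ a densely defined linear operator in $\mathcal K$. Suppose $A\dashv B$ with (possibly unbounded) intertwining operator $T$. If the resolvent set $\rho(A)$ is nonempty, then $T$ is everywhere defined and bounded.
   Context: A closed, densely defined operator $T:\mathcal H\to\mathcal K$ is called an intertwining operator for $A$ and $B$ if: (io$_0$) $D(A)\subset D(T)$ and $D(TA)=D(A)$, i.e. $\xi\in D(A)$ implies $A\xi\in D(T)$; (io$_1$) $T$ maps $D(A)$ into $D(B)$; (io$_2$) $BT\xi=TA\xi$ for all $\xi\in D(A)$. We write $A\dashv B$ ($A$ is quasi-similar to $B$) if there exists an intertwining operator $T$ for $A$ and $B$ which is injective and whose inverse $T^{-1}$ (defined on the range of $T$) is densely defined. Equivalently, $A\subseteq T^{-1}BT$ for a closed, densely defined, injective operator $T$ with dense range. *)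

From Stdlib Require Import Reals.
Open Scope R_scope.

Record Cplx := mkC { Cre : R ; Cim : R }.
Definition Cadd (a b : Cplx) : Cplx := mkC (Cre a + Cre b) (Cim a + Cim b).
Definition Cmul (a b : Cplx) : Cplx :=
  mkC (Cre a * Cre b - Cim a * Cim b) (Cre a * Cim b + Cim a * Cre b).
Definition Cconj (a : Cplx) : Cplx := mkC (Cre a) (- Cim a).
Definition C0 : Cplx := mkC 0 0.
Definition C1 : Cplx := mkC 1 0.

Record HilbertSpace := {
  hcar :> Type;
  hzero : hcar;
  hadd : hcar -> hcar -> hcar;
  hopp : hcar -> hcar;
  hscal : Cplx -> hcar -> hcar;
  hinner : hcar -> hcar -> Cplx;
  hadd_assoc : forall x y z, hadd x (hadd y z) = hadd (hadd x y) z;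
  hadd_comm : forall x y, hadd x y = hadd y x;
  hadd_0 : forall x, hadd x hzero = x;
  hadd_opp : forall x, hadd x (hopp x) = hzero;
  hscal_1 : forall x, hscal C1 x = x;
  hscal_mul : forall a b x, hscal a (hscal b x) = hscal (Cmul a b) x;
  hscal_addv : forall a x y, hscal a (hadd x y) = hadd (hscal a x) (hscal a y);
  hscal_adds : forall a b x, hscal (Cadd a b) x = hadd (hscal a x) (hscal b x);
  (* inner product axioms (linear in the first argument) *)
  hinner_add : forall x y z, hinner (hadd x y) z = Cadd (hinner x z) (hinner y z);
  hinner_scal : forall a x y, hinner (hscal a x) y = Cmul a (hinner x y);
  hinner_conj : forall x y, hinner y x = Cconj (hinner x y);
  hinner_pos : forall x, 0 <= Cre (hinner x x);
  hinner_def : forall x, hinner x x = C0 -> x = hzero;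
  hcomplete : forall u : nat -> hcar,
    (forall eps, 0 < eps -> exists N, forall m n, (N <= m)%nat -> (N <= n)%nat ->
        sqrt (Cre (hinner (hadd (u m) (hopp (u n))) (hadd (u m) (hopp (u n))))) < eps) ->
    exists l, forall eps, 0 < eps -> exists N, forall n, (N <= n)%nat ->
        sqrt (Cre (hinner (hadd (u n) (hopp l)) (hadd (u n) (hopp l)))) < eps
}.

Arguments hzero {h}. Arguments hadd {h}. Arguments hopp {h}.
Arguments hscal {h}. Arguments hinner {h}.

Definition hsub {H : HilbertSpace} (x y : H) : H := hadd x (hopp y).
Definition hnorm {H : HilbertSpace} (x : H) : R := sqrt (Cre (hinner x x)).

Definition hconv {H : HilbertSpace} (u : nat -> H) (l : H) : Prop :=
  forall eps, 0 < eps -> exists N, forall n, (N <= n)%nat -> hnorm (hsub (u n) l) < eps.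

Definition dense {H : HilbertSpace} (S : H -> Prop) : Prop :=
  forall x eps, 0 < eps -> exists d, S d /\ hnorm (hsub x d) < eps.

Record Op (H K : HilbertSpace) := mkOp { dom : H -> Prop ; app : H -> K }.
Arguments dom {H K}. Arguments app {H K}.

Definition linear_op {H K : HilbertSpace} (T : Op H K) : Prop :=
  dom T hzero /\
  (forall x y, dom T x -> dom T y -> dom T (hadd x y)) /\
  (forall a x, dom T x -> dom T (hscal a x)) /\
  (forall x y, dom T x -> dom T y -> app T (hadd x y) = hadd (app T x) (app T y)) /\
  (forall a x, dom T x -> app T (hscal a x) = hscal a (app T x)).

Definition densely_defined {H K : HilbertSpace} (T : Op H K) : Prop := dense (dom T).

Definition closed_op {H K : HilbertSpace} (T : Op H K) : Prop :=
  forall (u : nat -> H) (x : H) (y : K),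
    (forall n, dom T (u n)) -> hconv u x -> hconv (fun n => app T (u n)) y ->
    dom T x /\ app T x = y.

Definition injective_op {H K : HilbertSpace} (T : Op H K) : Prop :=
  forall x y, dom T x -> dom T y -> app T x = app T y -> x = y.
Definition range_op {H K : HilbertSpace} (T : Op H K) (y : K) : Prop :=
  exists x, dom T x /\ app T x = y.

Definition intertwining {H K : HilbertSpace} (A : Op H H) (B : Op K K) (T : Op H K) : Prop :=
  closed_op T /\ densely_defined T /\ linear_op T /\
  (forall xi, dom A xi -> dom T xi /\ dom T (app A xi)) /\           (* io_0 *)
  (forall xi, dom A xi -> dom B (app T xi)) /\
  (forall xi, dom A xi -> app B (app T xi) = app T (app A xi)).

(** T witnesses A ⊣ B *)
Definition quasi_similar_via {H K : HilbertSpace} (A : Op H H) (B : Op K K) (T : Op H K) : Prop :=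
  intertwining A B T /\ injective_op T /\ dense (range_op T).

Definition in_resolvent {H : HilbertSpace} (A : Op H H) (lam : Cplx) : Prop :=
  exists Rl : H -> H,
    (forall y, dom A (Rl y) /\ hsub (app A (Rl y)) (hscal lam (Rl y)) = y) /\
    (forall x, dom A x -> Rl (hsub (app A x) (hscal lam x)) = x) /\
    (exists M, forall y, hnorm (Rl y) <= M * hnorm y).

Definition everywhere_defined_bounded {H K : HilbertSpace} (T : Op H K) : Prop :=
  (forall x, dom T x) /\ exists M, forall x, hnorm (app T x) <= M * hnorm x.

(** Let [lam] lie in the resolvent set of [A].  Every [y] equals [(A - lam) x]
    with [x = R_lam y] in [D(A)]; by (io_0) both [x] and [A x] lie in [D(T)],
    hence so does [y].  So the closed operator [T] is defined everywhere, and
    the closed graph theorem makes it bounded.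

    The closed graph theorem follows classically: Baire gives a ball where
    [{x | |T x| <= n}] is dense, rescaling makes [T] "almost bounded", and
    iterated approximation plus closedness yields a genuine bound. *)

From Stdlib Require Import Reals Lra Classical ClassicalEpsilon.
Open Scope R_scope.

Arguments hadd_assoc {h}. Arguments hadd_comm {h}. Arguments hadd_0 {h}.
Arguments hadd_opp {h}. Arguments hscal_1 {h}. Arguments hscal_mul {h}.
Arguments hscal_addv {h}. Arguments hscal_adds {h}. Arguments hinner_add {h}.
Arguments hinner_scal {h}. Arguments hinner_conj {h}. Arguments hinner_pos {h}.

Lemma Cext (a b : Cplx) : Cre a = Cre b -> Cim a = Cim b -> a = b.
Proof. destruct a, b; simpl; intros; subst; reflexivity. Qed.

Lemma rec_choice {X : Type} (Rel : nat -> X -> X -> Prop) (x0 : X) :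
  (forall n x, exists y, Rel n x y) ->
  exists f : nat -> X, f O = x0 /\ forall n, Rel n (f n) (f (S n)).
Proof.
  intro Hex.
  pose (next n x := proj1_sig (constructive_indefinite_description _ (Hex n x))).
  exists (fix f n := match n with O => x0 | S n => next n (f n) end).
  split; [reflexivity|].
  intro n. exact (proj2_sig (constructive_indefinite_description _ (Hex n _))).
Qed.

Lemma geom_small (a eps : R) : 0 <= a -> 0 < eps ->
  exists N, forall n, (N <= n)%nat -> a * (/2) ^ n < eps.
Proof.
  intros Ha He.
  destruct (pow_lt_1_zero (/2)) with (y := eps / (a + 1)) as [N HN].
  { rewrite Rabs_pos_eq; lra. }
  { apply Rdiv_lt_0_compat; lra. }
  exists N. intros n Hn. specialize (HN n Hn).
  assert (Hpos : 0 < (/2) ^ n) by (apply pow_lt; lra).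
  rewrite Rabs_pos_eq in HN by lra.
  apply Rmult_lt_compat_l with (r := a + 1) in HN; [|lra].
  replace ((a + 1) * (eps / (a + 1))) with eps in HN by (field; lra). nra.
Qed.

Section VectorAlgebra.
Context {H : HilbertSpace}.
Implicit Types x y z : H.

Lemma hadd_0l x : hadd hzero x = x.
Proof. rewrite hadd_comm; apply hadd_0. Qed.

Lemma hadd_oppl x : hadd (hopp x) x = hzero.
Proof. rewrite hadd_comm; apply hadd_opp. Qed.

Lemma hadd_cancel x y z : hadd x y = hadd x z -> y = z.
Proof.
  intro E. rewrite <- (hadd_0l y), <- (hadd_0l z), <- (hadd_oppl x), <- !hadd_assoc, E.
  reflexivity.
Qed.

Lemma hopp_unique x y : hadd x y = hzero -> y = hopp x.
Proof. intro E. apply (hadd_cancel x). rewrite E, hadd_opp. reflexivity. Qed.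

Lemma hopp_opp x : hopp (hopp x) = x.
Proof. symmetry. apply hopp_unique. apply hadd_oppl. Qed.

Lemma hopp_add x y : hopp (hadd x y) = hadd (hopp x) (hopp y).
Proof.
  symmetry. apply hopp_unique.
  rewrite (hadd_comm (hopp x)), hadd_assoc, <- (hadd_assoc x y), hadd_opp, hadd_0, hadd_opp.
  reflexivity.
Qed.

Lemma hopp_zero : hopp (@hzero H) = hzero.
Proof. symmetry; apply hopp_unique; apply hadd_0. Qed.

Lemma hsub_diag x : hsub x x = hzero.
Proof. apply hadd_opp. Qed.

Lemma hsub_0 x : hsub x hzero = x.
Proof. unfold hsub; rewrite hopp_zero; apply hadd_0. Qed.

Lemma hsub_sym x y : hsub y x = hopp (hsub x y).
Proof. unfold hsub. rewrite hopp_add, hopp_opp, hadd_comm. reflexivity. Qed.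

Lemma hsub_chain x y z : hsub x z = hadd (hsub x y) (hsub y z).
Proof.
  unfold hsub. rewrite hadd_assoc, <- (hadd_assoc x (hopp y) y), hadd_oppl, hadd_0.
  reflexivity.
Qed.

Lemma hsub_addK x y : hsub (hadd x y) x = y.
Proof.
  unfold hsub. rewrite (hadd_comm x y), <- hadd_assoc, hadd_opp, hadd_0. reflexivity.
Qed.

Lemma hsub_add_r x y z : hsub x (hadd y z) = hsub (hsub x y) z.
Proof. unfold hsub. rewrite hopp_add, hadd_assoc. reflexivity. Qed.

Lemma hsub_swap (a b c d : H) : hsub (hsub a b) (hsub c d) = hsub (hsub a c) (hsub b d).
Proof.
  unfold hsub. rewrite !hopp_add, !hopp_opp, <- !hadd_assoc. f_equal.
  rewrite !hadd_assoc. f_equal. apply hadd_comm.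
Qed.

Lemma hscal_0 x : hscal C0 x = hzero.
Proof.
  apply (hadd_cancel (hscal C0 x)). rewrite hadd_0, <- hscal_adds.
  f_equal. apply Cext; simpl; ring.
Qed.

Lemma hscal_m1 x : hscal (mkC (-1) 0) x = hopp x.
Proof.
  apply hopp_unique. rewrite <- (hscal_1 x) at 1. rewrite <- hscal_adds, <- (hscal_0 x).
  f_equal. apply Cext; simpl; ring.
Qed.

Lemma hscal_zero (a : Cplx) : hscal a (@hzero H) = hzero.
Proof.
  apply (hadd_cancel (hscal a hzero)). rewrite hadd_0, <- hscal_addv, hadd_0. reflexivity.
Qed.

Lemma hscal_opp (a : Cplx) x : hscal a (hopp x) = hopp (hscal a x).
Proof. apply hopp_unique. rewrite <- hscal_addv, hadd_opp. apply hscal_zero. Qed.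

Lemma hscal_sub (a : Cplx) x y : hscal a (hsub x y) = hsub (hscal a x) (hscal a y).
Proof. unfold hsub. rewrite hscal_addv, hscal_opp. reflexivity. Qed.

Lemma hscal_real_comp (s t : R) x :
  hscal (mkC s 0) (hscal (mkC t 0) x) = hscal (mkC (s * t) 0) x.
Proof. rewrite hscal_mul. f_equal. apply Cext; simpl; ring. Qed.

End VectorAlgebra.

Section Norm.
Context {H : HilbertSpace}.
Implicit Types x y z : H.

Definition N2 x : R := Cre (hinner x x).

Lemma N2_ge0 x : 0 <= N2 x.
Proof. apply hinner_pos. Qed.

Lemma hnorm_ge0 x : 0 <= hnorm x.
Proof. apply sqrt_pos. Qed.

Lemma Re_inner_sym x y : Cre (hinner y x) = Cre (hinner x y).
Proof. rewrite hinner_conj. reflexivity. Qed.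

Lemma Re_inner_addr x y z : Cre (hinner x (hadd y z)) = Cre (hinner x y) + Cre (hinner x z).
Proof. rewrite Re_inner_sym, hinner_add. simpl. rewrite !(Re_inner_sym x). reflexivity. Qed.

Lemma Re_inner_scall (t : R) x y : Cre (hinner (hscal (mkC t 0) x) y) = t * Cre (hinner x y).
Proof. rewrite hinner_scal. simpl. ring. Qed.

Lemma Re_inner_scalr (t : R) x y : Cre (hinner x (hscal (mkC t 0) y)) = t * Cre (hinner x y).
Proof. rewrite Re_inner_sym, Re_inner_scall, Re_inner_sym. reflexivity. Qed.

Lemma N2_add x y : N2 (hadd x y) = N2 x + N2 y + 2 * Cre (hinner x y).
Proof.
  unfold N2. rewrite hinner_add. simpl. rewrite !Re_inner_addr, (Re_inner_sym y x). ring.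
Qed.

Lemma N2_scal (t : R) x : N2 (hscal (mkC t 0) x) = t * t * N2 x.
Proof. unfold N2. rewrite Re_inner_scall, Re_inner_scalr. ring. Qed.

(** Cauchy-Schwarz for the real part of the inner product: the quadratic
    [t |-> N2 (x + t y)] is nonnegative, so its discriminant is not positive. *)
Lemma CS_real x y : Cre (hinner x y) * Cre (hinner x y) <= N2 x * N2 y.
Proof.
  set (b := Cre (hinner x y)). set (a := N2 y). set (c := N2 x).
  assert (Quad : forall t, 0 <= c + 2 * t * b + t * t * a).
  { intro t. pose proof (N2_ge0 (hadd x (hscal (mkC t 0) y))) as P.
    rewrite N2_add, N2_scal, Re_inner_scalr in P. unfold a, b, c. lra. }
  assert (Ha : 0 <= a) by apply N2_ge0. assert (Hc : 0 <= c) by apply N2_ge0.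
  destruct (Req_dec a 0) as [A0|A0].
  - destruct (Req_dec b 0) as [B0|B0]; [rewrite B0, A0; lra|].
    exfalso. specialize (Quad (- (c + 1) / (2 * b))). rewrite A0 in Quad.
    replace (c + 2 * (- (c + 1) / (2 * b)) * b + - (c + 1) / (2 * b) * (- (c + 1) / (2 * b)) * 0)
      with (-1) in Quad by (field; auto). lra.
  - specialize (Quad (- b / a)).
    replace (c + 2 * (- b / a) * b + - b / a * (- b / a) * a) with (c - b * b / a) in Quad
      by (field; auto).
    apply Rmult_le_compat_r with (r := a) in Quad; [|lra].
    replace ((c - b * b / a) * a) with (c * a - b * b) in Quad by (field; auto). lra.
Qed.

Lemma hnorm_triangle x y : hnorm (hadd x y) <= hnorm x + hnorm y.
Proof.
  unfold hnorm. fold (N2 (hadd x y)) (N2 x) (N2 y). rewrite N2_add.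
  pose proof (N2_ge0 x); pose proof (N2_ge0 y).
  pose proof (sqrt_pos (N2 x)); pose proof (sqrt_pos (N2 y)).
  assert (Hb : Cre (hinner x y) <= sqrt (N2 x) * sqrt (N2 y)).
  { rewrite <- sqrt_mult by auto.
    apply Rle_trans with (Rabs (Cre (hinner x y))); [apply Rle_abs|].
    rewrite <- sqrt_Rsqr_abs. apply sqrt_le_1_alt. apply CS_real. }
  rewrite <- (sqrt_square (sqrt (N2 x) + sqrt (N2 y))) by lra.
  apply sqrt_le_1_alt.
  replace ((sqrt (N2 x) + sqrt (N2 y)) * (sqrt (N2 x) + sqrt (N2 y))) with
    (sqrt (N2 x) * sqrt (N2 x) + sqrt (N2 y) * sqrt (N2 y) + 2 * (sqrt (N2 x) * sqrt (N2 y)))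
    by ring.
  rewrite !sqrt_sqrt by auto. lra.
Qed.

Lemma hnorm_scal (t : R) x : hnorm (hscal (mkC t 0) x) = Rabs t * hnorm x.
Proof.
  unfold hnorm. fold (N2 (hscal (mkC t 0) x)) (N2 x).
  rewrite N2_scal, sqrt_mult, <- sqrt_Rsqr_abs by (apply Rle_0_sqr || apply N2_ge0).
  reflexivity.
Qed.

Lemma hnorm_opp x : hnorm (hopp x) = hnorm x.
Proof. rewrite <- hscal_m1, hnorm_scal, Rabs_left by lra. ring. Qed.

Lemma hnorm_zero : hnorm (@hzero H) = 0.
Proof. rewrite <- (hscal_0 (@hzero H)). unfold C0. rewrite hnorm_scal, Rabs_R0. ring. Qed.

Lemma hnorm_sub_sym x y : hnorm (hsub y x) = hnorm (hsub x y).
Proof. rewrite hsub_sym, hnorm_opp. reflexivity. Qed.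

Lemma hnorm_sub_tri x y z : hnorm (hsub x z) <= hnorm (hsub x y) + hnorm (hsub y z).
Proof. rewrite (hsub_chain x y z). apply hnorm_triangle. Qed.

Lemma hnorm_sub_le x y : hnorm (hsub x y) <= hnorm x + hnorm y.
Proof. unfold hsub. rewrite <- (hnorm_opp y). apply hnorm_triangle. Qed.

End Norm.

Section Limits.
Context {H : HilbertSpace}.

Lemma bound_of_limit (u : nat -> H) (l c : H) (r : R) (K : nat) :
  hconv u l -> (forall n, (K <= n)%nat -> hnorm (hsub (u n) c) <= r) ->
  hnorm (hsub l c) <= r.
Proof.
  intros Hc Hb. apply Rnot_lt_le. intro Hlt.
  destruct (Hc (hnorm (hsub l c) - r)) as [N HN]; [lra|].
  specialize (HN (max N K) (Nat.le_max_l _ _)).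
  specialize (Hb (max N K) (Nat.le_max_r _ _)).
  pose proof (hnorm_sub_tri l (u (max N K)) c) as Tr.
  rewrite (hnorm_sub_sym (u _) l) in Tr. lra.
Qed.

Lemma geometric_limit (u : nat -> H) (c : R) :
  0 <= c -> (forall m, hnorm (hsub (u (S m)) (u m)) <= c * (/2) ^ m) ->
  exists l, hconv u l /\ hnorm (hsub l (u O)) <= 2 * c.
Proof.
  intros Hc Hstep.
  assert (Tele : forall a b, (a <= b)%nat ->
            hnorm (hsub (u b) (u a)) <= 2 * c * ((/2) ^ a - (/2) ^ b)).
  { intros a b Hab. induction Hab as [|m Hab IH].
    - rewrite hsub_diag, hnorm_zero. lra.
    - pose proof (hnorm_sub_tri (u (S m)) (u m) (u a)). specialize (Hstep m).
      simpl ((/2) ^ S m). lra. }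
  assert (Hpow : forall n, 0 <= 2 * c * (/2) ^ n).
  { intro n. apply Rmult_le_pos; [lra|]. apply pow_le; lra. }
  destruct (hcomplete H u) as [l Hl].
  { intros eps He. destruct (geom_small (2 * c) eps) as [N HN]; [lra|exact He|].
    exists N. intros m n Hm Hn. fold (hsub (u m) (u n)). fold (hnorm (hsub (u m) (u n))).
    destruct (Nat.le_ge_cases m n) as [h|h].
    - specialize (Tele m n h). rewrite hnorm_sub_sym in Tele.
      specialize (HN m Hm). specialize (Hpow n). lra.
    - specialize (Tele n m h). specialize (HN n Hn). specialize (Hpow m). lra. }
  exists l. split; [exact Hl|].
  apply (bound_of_limit u l (u O) _ O Hl). intros n _.
  specialize (Tele O n (Nat.le_0_l n)). specialize (Hpow n). simpl in Tele. lra.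
Qed.

Lemma nested_balls (c : nat -> H) (r : nat -> R) :
  (forall k, 0 < r k <= (/2) ^ k) ->
  (forall k, hnorm (hsub (c (S k)) (c k)) + r (S k) <= r k) ->
  exists l, forall k, hnorm (hsub l (c k)) <= r k.
Proof.
  intros Hr Hnest.
  assert (Tele : forall k m, (k <= m)%nat -> hnorm (hsub (c m) (c k)) + r m <= r k).
  { intros k m Hkm. induction Hkm as [|m Hkm IH].
    - rewrite hsub_diag, hnorm_zero. lra.
    - pose proof (hnorm_sub_tri (c (S m)) (c m) (c k)). specialize (Hnest m). lra. }
  destruct (geometric_limit c 1) as (l & Hl & _); [lra| |].
  { intro m. specialize (Hnest m). pose proof (Hr m). pose proof (Hr (S m)). lra. }
  exists l. intro k. apply (bound_of_limit c l (c k) _ k Hl).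
  intros m Hm. specialize (Tele k m Hm). specialize (Hr m). lra.
Qed.

Lemma baire (P : nat -> H -> Prop) :
  (forall x, exists n, P n x) ->
  exists n x0 r, 0 < r /\ forall z, hnorm (hsub z x0) < r ->
    forall eps, 0 < eps -> exists w, P n w /\ hnorm (hsub z w) < eps.
Proof.
  intro Hcov. apply NNPP; intro Hnowhere.
  (* Each [P n] is nowhere dense: every ball contains a smaller ball avoiding it. *)
  assert (Hshrink : forall n (c : H) r, 0 < r -> exists c' r',
            0 < r' /\ r' <= r / 2 /\ hnorm (hsub c' c) + r' <= r /\
            forall z, hnorm (hsub z c') <= r' -> ~ P n z).
  { intros n c r Hr.
    assert (Hfar : exists z eps, hnorm (hsub z c) < r /\ 0 < eps /\
                     forall w, P n w -> eps <= hnorm (hsub z w)).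
    { apply NNPP; intro H1. apply Hnowhere. exists n, c, r. split; [exact Hr|].
      intros z Hz eps Heps. apply NNPP; intro H2. apply H1. exists z, eps.
      repeat split; auto. intros w Pw. apply Rnot_lt_le. intro Hw. apply H2. eauto. }
    destruct Hfar as (z & eps & Hz & He & Hw).
    pose proof (hnorm_ge0 (hsub z c)).
    exists z, (Rmin (eps / 2) ((r - hnorm (hsub z c)) / 2)).
    pose proof (Rmin_l (eps / 2) ((r - hnorm (hsub z c)) / 2)).
    pose proof (Rmin_r (eps / 2) ((r - hnorm (hsub z c)) / 2)).
    repeat split; try lra.
    - apply Rmin_glb_lt; lra.
    - intros z' Hz' Pz'. specialize (Hw z' Pz'). rewrite hnorm_sub_sym in Hw. lra. }
  destruct (rec_choice (fun n (p q : H * R) => 0 < snd p ->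
             0 < snd q /\ snd q <= snd p / 2 /\ hnorm (hsub (fst q) (fst p)) + snd q <= snd p /\
             forall z, hnorm (hsub z (fst q)) <= snd q -> ~ P n z) (hzero, 1))
    as (f & Hf0 & Hf).
  { intros n [c r]. destruct (Rlt_dec 0 r) as [Hr|Hr].
    - destruct (Hshrink n c r Hr) as (c' & r' & Hc'). exists (c', r'). intros _. exact Hc'.
    - exists (c, r). simpl. intro. contradiction. }
  assert (Hrad : forall k, 0 < snd (f k) <= (/2) ^ k).
  { induction k as [|k IH]; [rewrite Hf0; simpl; lra|].
    destruct (Hf k (proj1 IH)) as (A1 & A2 & _). simpl. lra. }
  destruct (nested_balls (fun k => fst (f k)) (fun k => snd (f k)) Hrad) as [l Hl].
  { intro k. apply (Hf k (proj1 (Hrad k))). }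
  destruct (Hcov l) as [n Pn].
  destruct (Hf n (proj1 (Hrad n))) as (_ & _ & _ & Avoid).
  exact (Avoid l (Hl (S n)) Pn).
Qed.

End Limits.

Section LinearOperators.
Context {H K : HilbertSpace}.
Variable T : Op H K.
Hypothesis T_linear : linear_op T.

Lemma lin_zero : app T hzero = hzero.
Proof.
  destruct T_linear as (D0 & _ & _ & Aadd & _).
  apply (hadd_cancel (app T hzero)). rewrite hadd_0, <- Aadd, hadd_0 by auto. reflexivity.
Qed.

Lemma lin_sub x y : dom T x -> dom T y ->
  dom T (hsub x y) /\ app T (hsub x y) = hsub (app T x) (app T y).
Proof.
  intros Dx Dy. destruct T_linear as (_ & Dadd & Dsc & Aadd & Asc).
  unfold hsub. rewrite <- !hscal_m1. split; auto. rewrite Aadd, Asc; auto.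
Qed.

End LinearOperators.

(** This is the intermediate conclusion of the closed graph theorem. *)
Definition almost_bounded {H K : HilbertSpace} (T : Op H K) (C : R) : Prop :=
  forall u eps, 0 < eps ->
    exists w, hnorm (hsub u w) < eps /\ hnorm (app T w) <= C * hnorm u.

Section ClosedGraph.
Context {H K : HilbertSpace}.
Variable T : Op H K.
Hypothesis T_linear : linear_op T.
Hypothesis T_total : forall x, dom T x.

Lemma centered_approximation (b : R) (x0 : H) (r : R) :
  (forall z, hnorm (hsub z x0) < r ->
     forall eps, 0 < eps -> exists w, hnorm (app T w) <= b /\ hnorm (hsub z w) < eps) ->
  0 < r ->
  forall z, hnorm z < r ->
    forall eps, 0 < eps -> exists w, hnorm (app T w) <= 2 * b /\ hnorm (hsub z w) < eps.
Proof.
  intros Hden Hr z Hz eps He.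
  destruct (Hden (hadd x0 z)) with (eps := eps / 2) as (w1 & B1 & N1).
  { rewrite hsub_addK. exact Hz. } { lra. }
  destruct (Hden x0) with (eps := eps / 2) as (w2 & B2 & N2).
  { rewrite hsub_diag, hnorm_zero. exact Hr. } { lra. }
  exists (hsub w1 w2). split.
  - rewrite (proj2 (lin_sub T T_linear w1 w2 (T_total _) (T_total _))).
    pose proof (hnorm_sub_le (app T w1) (app T w2)). lra.
  - rewrite <- (hsub_addK x0 z), hsub_swap.
    pose proof (hnorm_sub_le (hsub (hadd x0 z) w1) (hsub x0 w2)). lra.
Qed.

Lemma almost_bounded_of_ball (b r : R) :
  0 <= b -> 0 < r ->
  (forall z, hnorm z < r ->
     forall eps, 0 < eps -> exists w, hnorm (app T w) <= b /\ hnorm (hsub z w) < eps) ->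
  almost_bounded T (2 * b / r).
Proof.
  intros Hb Hr Hball u eps He.
  destruct (hnorm_ge0 u) as [Hu|Hu].
  - set (s := r / (2 * hnorm u)).
    assert (Hs : 0 < s) by (unfold s; apply Rdiv_lt_0_compat; lra).
    assert (Hs' : 0 < / s) by (apply Rinv_0_lt_compat; lra).
    destruct (Hball (hscal (mkC s 0) u)) with (eps := eps * s) as (w & Bw & Nw).
    { rewrite hnorm_scal, Rabs_pos_eq by lra. unfold s. field_simplify; lra. }
    { nra. }
    exists (hscal (mkC (/ s) 0) w). split.
    + replace u with (hscal (mkC (/ s) 0) (hscal (mkC s 0) u)) at 1
        by (rewrite hscal_real_comp, Rinv_l by lra; apply hscal_1).
      rewrite <- hscal_sub, hnorm_scal, Rabs_pos_eq by lra.
      apply Rmult_lt_compat_l with (r := / s) in Nw; [|lra].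
      replace (/ s * (eps * s)) with eps in Nw by (field; lra). exact Nw.
    + destruct T_linear as (_ & _ & _ & _ & Asc).
      rewrite Asc, hnorm_scal, Rabs_pos_eq by (auto || lra).
      apply Rle_trans with (/ s * b); [apply Rmult_le_compat_l; lra|].
      unfold s. right. field. lra.
  - exists hzero. rewrite hsub_0, <- Hu, (lin_zero T T_linear), hnorm_zero.
    split; [exact He|lra].
Qed.

(** By Baire, a linear operator defined everywhere is almost bounded. *)
Lemma almost_bounded_of_total : exists C, 0 <= C /\ almost_bounded T C.
Proof.
  destruct (baire (fun n x => hnorm (app T x) <= INR n)) as (n & x0 & r & Hr & Hden).
  { intro x. destruct (INR_unbounded (hnorm (app T x))) as [n Hn]. exists n. lra. }
  exists (2 * (2 * INR n) / r). pose proof (pos_INR n). split.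
  - apply Rmult_le_pos; [lra|]. left. apply Rinv_0_lt_compat. exact Hr.
  - apply almost_bounded_of_ball; [lra|exact Hr|].
    apply (centered_approximation (INR n) x0 r); [|exact Hr].
    intros z Hz eps He. destruct (Hden z Hz eps He) as (w & Pw & Nw). eauto.
Qed.

Hypothesis T_closed : closed_op T.

(** For a closed operator, almost boundedness yields a true bound: approximate
    [z] by partial sums [v m] of successive approximations of the remainders;
    the images [T (v m)] converge geometrically and closedness identifies their
    limit with [T z]. *)
Lemma almost_bounded_estimate (C : R) :
  0 <= C -> almost_bounded T C ->
  forall z d, hnorm z < d -> hnorm (app T z) <= 2 * C * d.
Proof.
  intros HC Hab z d Hzd.
  assert (Hd : 0 < d) by (pose proof (hnorm_ge0 z); lra).
  destruct (rec_choice (fun m v v' => exists w, v' = hadd v w /\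
              hnorm (hsub (hsub z v) w) < d * (/2) ^ S m /\
              hnorm (app T w) <= C * hnorm (hsub z v)) hzero) as (v & Hv0 & Hv).
  { intros m v. destruct (Hab (hsub z v) (d * (/2) ^ S m)) as (w & Hw).
    { apply Rmult_lt_0_compat; [lra|]. apply pow_lt; lra. }
    exists (hadd v w), w. split; [reflexivity|exact Hw]. }
  assert (Remainder : forall m, hnorm (hsub z (v m)) <= d * (/2) ^ m).
  { induction m as [|m IH]; [rewrite Hv0, hsub_0; simpl; lra|].
    destruct (Hv m) as (w & -> & Nw & _). rewrite hsub_add_r. lra. }
  assert (Steps : forall m,
            hnorm (hsub (app T (v (S m))) (app T (v m))) <= C * d * (/2) ^ m).
  { intro m. destruct (Hv m) as (w & -> & _ & Bw).
    destruct T_linear as (_ & _ & _ & Aadd & _).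
    rewrite Aadd, hsub_addK by auto. rewrite Rmult_assoc.
    apply Rle_trans with (1 := Bw). apply Rmult_le_compat_l; auto. }
  destruct (geometric_limit (fun m => app T (v m)) (C * d)) as (y & Hy & Ny).
  { apply Rmult_le_pos; lra. } { exact Steps. }
  assert (Hvz : hconv v z).
  { intros eps He. destruct (geom_small d eps) as [N HN]; [lra|exact He|].
    exists N. intros m Hm. rewrite hnorm_sub_sym.
    specialize (Remainder m). specialize (HN m Hm). lra. }
  destruct (T_closed v z y (fun _ => T_total _) Hvz Hy) as [_ ->].
  rewrite Hv0, (lin_zero T T_linear), hsub_0 in Ny. lra.
Qed.

Lemma closed_graph : exists M, forall x, hnorm (app T x) <= M * hnorm x.
Proof.
  destruct almost_bounded_of_total as (C & HC & Hab).
  exists (2 * C). intro x. apply Rle_plus_epsilon. intros eps He.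
  replace (2 * C * hnorm x + eps) with (2 * C * (hnorm x + eps / (2 * C + 1)) +
                                        eps / (2 * C + 1)) by (field; lra).
  apply Rle_trans with (2 * C * (hnorm x + eps / (2 * C + 1))).
  - apply (almost_bounded_estimate C HC Hab).
    assert (0 < eps / (2 * C + 1)) by (apply Rdiv_lt_0_compat; lra). lra.
  - assert (0 < eps / (2 * C + 1)) by (apply Rdiv_lt_0_compat; lra). lra.
Qed.

End ClosedGraph.

(** An intertwining operator for [A] is defined everywhere as soon as [A] has
    a point [lam] in its resolvent set: [y = (A - lam) (R_lam y)] and
    (io_0) puts both [R_lam y] and [A (R_lam y)] in [D(T)]. *)
Lemma intertwiner_total {H K : HilbertSpace} (A : Op H H) (B : Op K K) (T : Op H K)
    (lam : Cplx) :
  intertwining A B T -> in_resolvent A lam -> forall y, dom T y.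
Proof.
  intros (_ & _ & L & Io0 & _) (Rl & HR & _) y.
  destruct (HR y) as [DA <-]. destruct (Io0 _ DA) as [D1 D2].
  assert (D3 : dom T (hscal lam (Rl y))) by (destruct L as (_ & _ & Dsc & _); auto).
  exact (proj1 (lin_sub T L _ _ D2 D3)).
Qed.

Theorem mainTheorem1 (H K : HilbertSpace) (A : Op H H) (B : Op K K) (T : Op H K) :
  linear_op A -> densely_defined A ->
  linear_op B -> densely_defined B ->
  quasi_similar_via A B T ->
  (exists lam : Cplx, in_resolvent A lam) ->
  everywhere_defined_bounded T.
Proof.
  intros _ _ _ _ [Hint _] [lam Hres].
  pose proof (intertwiner_total A B T lam Hint Hres) as Total.
  destruct Hint as (Closed & _ & Linear & _).
  split; [exact Total|].
  exact (closed_graph T Linear Total Closed).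
Qed.
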